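(* Let $\ell:K(H\times\mathrm{Id})\to HM$ be an abstract GSOS rule with $\ell$-interpretation $b$, let $k'=b^\sharp\cdot Mc^{-1}\cdot MHb^\sharp:MHMC\to C$, and let $V$ be an endofunctor with $MHM+V$ iteratable. Then every guarded recursive program scheme $e:V\to T^{MHM+V}$ has a unique interpreted solution $s:VC\to C$ in the cia $(C,k')$, and $[k',s]:(MHM+V)C\to C$ is a completely iterative algebra for $MHM+V$.
   Context: Let $\mathcal A$ be a category with binary products and coproducts, let $H:\mathcal A\to\mathcal A$ be a functor with a terminal coalgebra $c:C\to HC$ (an isomorphism by Lambek's lemma), and let $K:\mathcal A\to\mathcal A$ be a functor such that every object $X$ has a free $K$-algebra $\varphi_X:KMX\to MX$ with universal morphism $\eta_X:X\to MX$; $(M,\eta,\mu)$ is the free monad on $K$. For a $K$-algebra $a:KA\to A$ let $a^\sharp:MA\to A$ be the unique $K$-algebra homomorphism with $a^\sharp\cdot\eta_A=\mathrm{id}_A$. An abstract GSOS rule is a natural transformation $\ell:K(H\times\mathrm{Id})\to HM$; its $\ell$-interpretation is the unique $b:KC\to C$ with $c\cdot b=Hb^\sharp\cdot\ell_C\cdot K\langle c,\mathrm{id}_C\rangle$. A $G$-algebra $a:GA\to A$ is a completely iterative algebra (cia) if every $e:X\to GX+A$ has a unique $e^\dagger:X\to A$ with $e^\dagger=[a,\mathrm{id}_A]\cdot(Ge^\dagger+\mathrm{id}_A)\cdot e$; $(C,k')$ is a cia for $MHM$. An endofunctor $G$ is iteratable if for each $X$ a terminal coalgebra $T^GX$ for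 $G(-)+X$ exists, with inverse structure $[\tau^G_X,\eta^G_X]$; $T^G$ is a monad and $\kappa^G=\tau^G\cdot G\eta^G$. For an endofunctor $L$ with cia $(A,a)$ for $L$ and $L+V$ iteratable: a recursive program scheme is a natural transformation $e:V\to T^{L+V}$; it is guarded if $e=\tau^{L+V}\cdot(\mathrm{inl}\,T^{L+V})\cdot f$ for some natural $f:V\to LT^{L+V}$; an interpreted solution of $e$ in $(A,a)$ is a $V$-algebra $s:VA\to A$ for which there is an Eilenberg–Moore algebra $\beta:T^{L+V}A\to A$ for $T^{L+V}$ with $\beta\cdot\kappa^{L+V}_A=[a,s]$ and $s=\beta\cdot e_A$. Here $L=MHM$. *)

Set Implicit Arguments.
Unset Strict Implicit.

Record Category := {
  Ob :> Type;
  Hom : Ob -> Ob -> Type;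
  idm : forall X, Hom X X;
  comp : forall X Y Z, Hom Y Z -> Hom X Y -> Hom X Z;
  comp_idl : forall X Y (f : Hom X Y), comp (idm Y) f = f;
  comp_idr : forall X Y (f : Hom X Y), comp f (idm X) = f;
  comp_assoc : forall X Y Z W (h : Hom Z W) (g : Hom Y Z) (f : Hom X Y),
      comp h (comp g f) = comp (comp h g) f
}.
Arguments Hom {c} X Y.
Arguments idm {c} X.
Arguments comp {c X Y Z} g f.
Notation "g ⊚ f" := (comp g f) (at level 40, left associativity).

Record BinProducts (C : Category) := {
  prodO : C -> C -> C;
  pi1 : forall X Y, Hom (prodO X Y) X;
  pi2 : forall X Y, Hom (prodO X Y) Y;
  pairing : forall Z X Y, Hom Z X -> Hom Z Y -> Hom Z (prodO X Y);
  pairing_pi1 : forall Z X Y (f : Hom Z X) (g : Hom Z Y), pi1 X Y ⊚ pairing f g = f;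
  pairing_pi2 : forall Z X Y (f : Hom Z X) (g : Hom Z Y), pi2 X Y ⊚ pairing f g = g;
  pairing_uniq : forall Z X Y (f : Hom Z X) (g : Hom Z Y) (h : Hom Z (prodO X Y)),
      pi1 X Y ⊚ h = f -> pi2 X Y ⊚ h = g -> h = pairing f g
}.
Arguments prodO {C} _ X Y.
Arguments pi1 {C} _ X Y.
Arguments pi2 {C} _ X Y.
Arguments pairing {C} _ {Z X Y} f g.

Record BinCoproducts (C : Category) := {
  coprO : C -> C -> C;
  inl_ : forall X Y, Hom X (coprO X Y);
  inr_ : forall X Y, Hom Y (coprO X Y);
  copair : forall X Y Z, Hom X Z -> Hom Y Z -> Hom (coprO X Y) Z;
  copair_inl : forall X Y Z (f : Hom X Z) (g : Hom Y Z), copair f g ⊚ inl_ X Y = f;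
  copair_inr : forall X Y Z (f : Hom X Z) (g : Hom Y Z), copair f g ⊚ inr_ X Y = g;
  copair_uniq : forall X Y Z (f : Hom X Z) (g : Hom Y Z) (h : Hom (coprO X Y) Z),
      h ⊚ inl_ X Y = f -> h ⊚ inr_ X Y = g -> h = copair f g
}.
Arguments coprO {C} _ X Y.
Arguments inl_ {C} _ X Y.
Arguments inr_ {C} _ X Y.
Arguments copair {C} _ {X Y Z} f g.

(* An object map together with a morphism map (no laws): used for the
   composite functors built below, whose morphism maps are the canonical ones. *)
Record PreFunctor (C : Category) := {
  pobj :> C -> C;
  pmap : forall X Y, Hom X Y -> Hom (pobj X) (pobj Y)
}.
Arguments pobj {C} _ X.
Arguments pmap {C} _ {X Y} f.

Record Functor (C : Category) := {
  fpre :> PreFunctor C;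
  fmap_id : forall X, pmap fpre (idm X) = idm (fpre X);
  fmap_comp : forall X Y Z (g : Hom Y Z) (f : Hom X Y),
      pmap fpre (g ⊚ f) = pmap fpre g ⊚ pmap fpre f
}.

Section Constructions.
Context {C : Category} (P : BinProducts C) (S : BinCoproducts C).

Definition prod_mor {X Y X' Y'} (f : Hom X X') (g : Hom Y Y')
  : Hom (prodO P X Y) (prodO P X' Y') :=
  pairing P (f ⊚ pi1 P X Y) (g ⊚ pi2 P X Y).

Definition sum_mor {X Y X' Y'} (f : Hom X X') (g : Hom Y Y')
  : Hom (coprO S X Y) (coprO S X' Y') :=
  copair S (inl_ S X' Y' ⊚ f) (inr_ S X' Y' ⊚ g).

Definition compF (F G : PreFunctor C) : PreFunctor C :=
  {| pobj := fun X => F (G X); pmap := fun X Y f => pmap F (pmap G f) |}.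

Definition prodIdF (H : PreFunctor C) : PreFunctor C :=
  {| pobj := fun X => prodO P (H X) X;
     pmap := fun X Y f => prod_mor (pmap H f) f |}.

Definition sumF (F G : PreFunctor C) : PreFunctor C :=
  {| pobj := fun X => coprO S (F X) (G X);
     pmap := fun X Y f => sum_mor (pmap F f) (pmap G f) |}.

Record TerminalCoalgebra (H : PreFunctor C) := {
  tc_obj : C;
  tc_str : Hom tc_obj (H tc_obj);
  tc_unfold : forall A, Hom A (H A) -> Hom A tc_obj;
  tc_unfold_spec : forall A (a : Hom A (H A)),
      tc_str ⊚ tc_unfold a = pmap H (tc_unfold a) ⊚ a;
  tc_unfold_uniq : forall A (a : Hom A (H A)) (h : Hom A tc_obj),
      tc_str ⊚ h = pmap H h ⊚ a -> h = tc_unfold a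
}.

Record FreeAlgebras (K : PreFunctor C) := {
  Mo : C -> C;
  phi : forall X, Hom (K (Mo X)) (Mo X);
  eta : forall X, Hom X (Mo X);
  fext : forall X A, Hom (K A) A -> Hom X A -> Hom (Mo X) A;
  fext_hom : forall X A (a : Hom (K A) A) (f : Hom X A),
      fext a f ⊚ phi X = a ⊚ pmap K (fext a f);
  fext_eta : forall X A (a : Hom (K A) A) (f : Hom X A), fext a f ⊚ eta X = f;
  fext_uniq : forall X A (a : Hom (K A) A) (f : Hom X A) (h : Hom (Mo X) A),
      h ⊚ phi X = a ⊚ pmap K h -> h ⊚ eta X = f -> h = fext a f
}.
Arguments Mo {K} _ X.
Arguments phi {K} _ X.
Arguments eta {K} _ X.
Arguments fext {K} _ {X A} a f.

Definition MF {K : PreFunctor C} (FA : FreeAlgebras K) : PreFunctor C :=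
  {| pobj := Mo FA;
     pmap := fun X Y f => fext FA (phi FA Y) (eta FA Y ⊚ f) |}.

Definition sharp {K : PreFunctor C} (FA : FreeAlgebras K) {A} (a : Hom (K A) A)
  : Hom (Mo FA A) A := fext FA a (idm A).

Definition is_GSOS_rule {K H : PreFunctor C} (FA : FreeAlgebras K)
  (ell : forall X, Hom (K (prodO P (H X) X)) (H (Mo FA X))) : Prop :=
  forall X Y (f : Hom X Y),
    ell Y ⊚ pmap K (prod_mor (pmap H f) f) = pmap H (pmap (MF FA) f) ⊚ ell X.

Definition is_ell_interpretation {K H : PreFunctor C} (FA : FreeAlgebras K)
  (Tc : TerminalCoalgebra H)
  (ell : forall X, Hom (K (prodO P (H X) X)) (H (Mo FA X)))
  (b : Hom (K (tc_obj Tc)) (tc_obj Tc)) : Prop :=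
  let eqn := fun b' : Hom (K (tc_obj Tc)) (tc_obj Tc) =>
     tc_str Tc ⊚ b' = pmap H (sharp FA b') ⊚ ell (tc_obj Tc)
                      ⊚ pmap K (pairing P (tc_str Tc) (idm (tc_obj Tc))) in
  eqn b /\ forall b', eqn b' -> b' = b.

Definition is_cia (G : PreFunctor C) (A : C) (a : Hom (G A) A) : Prop :=
  forall X (e : Hom X (coprO S (G X) A)),
    exists edag : Hom X A,
      edag = copair S a (idm A) ⊚ sum_mor (pmap G edag) (idm A) ⊚ e /\
      forall h : Hom X A,
        h = copair S a (idm A) ⊚ sum_mor (pmap G h) (idm A) ⊚ e -> h = edag.

Record Iteratable (G : PreFunctor C) := {
  TG : C -> C;
  tout : forall X, Hom (TG X) (coprO S (G (TG X)) X);
  tunfold : forall X A, Hom A (coprO S (G A) X) -> Hom A (TG X);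
  tunfold_spec : forall X A (al : Hom A (coprO S (G A) X)),
      tout X ⊚ tunfold al = sum_mor (pmap G (tunfold al)) (idm X) ⊚ al;
  tunfold_uniq : forall X A (al : Hom A (coprO S (G A) X)) (h : Hom A (TG X)),
      tout X ⊚ h = sum_mor (pmap G h) (idm X) ⊚ al -> h = tunfold al;
  tinv : forall X, Hom (coprO S (G (TG X)) X) (TG X);
  tinv_l : forall X, tinv X ⊚ tout X = idm (TG X);
  tinv_r : forall X, tout X ⊚ tinv X = idm (coprO S (G (TG X)) X)
}.
Arguments TG {G} _ X.
Arguments tout {G} _ X.
Arguments tunfold {G} _ {X A} al.
Arguments tinv {G} _ X.

Section Iter.
Context {G : PreFunctor C} (It : Iteratable G).

Definition tau X : Hom (G (TG It X)) (TG It X) := tinv It X ⊚ inl_ S _ _.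
Definition teta X : Hom X (TG It X) := tinv It X ⊚ inr_ S _ _.

Definition Tmap {X Y} (f : Hom X Y) : Hom (TG It X) (TG It Y) :=
  tunfold It (sum_mor (idm _) f ⊚ tout It X).

(* multiplication mu_X : T T X -> T X, obtained by unfolding the coalgebra
   T T X + T X -> G(T T X + T X) + X *)
Definition mu X : Hom (TG It (TG It X)) (TG It X) :=
  let Z := coprO S (TG It (TG It X)) (TG It X) in
  let z2 : Hom (TG It X) (coprO S (G Z) X) :=
      sum_mor (pmap G (inr_ S _ _)) (idm X) ⊚ tout It X in
  let z1 : Hom (TG It (TG It X)) (coprO S (G Z) X) :=
      copair S (inl_ S (G Z) X ⊚ pmap G (inl_ S _ _)) z2 ⊚ tout It (TG It X) in
  tunfold It (copair S z1 z2) ⊚ inl_ S _ _.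

Definition kappa X : Hom (G X) (TG It X) := tau X ⊚ pmap G (teta X).

Definition is_EM_algebra A (beta : Hom (TG It A) A) : Prop :=
  beta ⊚ teta A = idm A /\ beta ⊚ mu A = beta ⊚ Tmap beta.
End Iter.

Section RPS.
Context (L V : PreFunctor C) (It : Iteratable (sumF L V)).

Definition is_RPS (e : forall X, Hom (V X) (TG It X)) : Prop :=
  forall X Y (f : Hom X Y), Tmap It f ⊚ e X = e Y ⊚ pmap V f.

Definition is_guarded (e : forall X, Hom (V X) (TG It X)) : Prop :=
  exists f : forall X, Hom (V X) (L (TG It X)),
    (forall X Y (g : Hom X Y), pmap L (Tmap It g) ⊚ f X = f Y ⊚ pmap V g) /\
    (forall X, e X = tau It X ⊚ inl_ S (L (TG It X)) (V (TG It X)) ⊚ f X).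

Definition is_interpreted_solution (e : forall X, Hom (V X) (TG It X))
  (A : C) (a : Hom (L A) A) (s : Hom (V A) A) : Prop :=
  exists beta : Hom (TG It A) A,
    is_EM_algebra (It:=It) beta /\
    beta ⊚ kappa It A = copair S a s /\
    s = beta ⊚ e A.
End RPS.

End Constructions.

(* First, for any cia (A, a) for L and any guarded scheme e = tau ⊚ inl ⊚ f, the
   L-flat equation on T A that keeps L-nodes, unfolds V-nodes by f and flattens
   by mu has a unique solution beta.  It is an Eilenberg-Moore algebra with
   beta ⊚ kappa = [a, beta ⊚ e_A], and the algebra of any interpreted solution
   solves the same equation, whence uniqueness.  An (L + V)-flat equation over X
   becomes an L-flat equation over X + T X, so [a, beta ⊚ e_A] is again a cia.

   Second, (C, k') is a cia for M H M.  The rule ell extends to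
   rho : M (H × Id) -> H M × M, and b^# is then a coalgebra morphism:
   c ⊚ b^# = H b^# ⊚ π1 ⊚ rho ⊚ M <c, id>.  Through rho, a flat equation e over X
   turns the terms over the unknowns Y = H M X + C into an H-coalgebra; its unique
   morphism into C yields a solution, and every solution h arises this way since
   b^# ⊚ M [c^-1 ⊚ H (b^# ⊚ M h), id] is also a coalgebra morphism. *)

From Corelib Require Import ssreflect.

Section CategoryFacts.
Context {C : Category}.

Lemma comp_assoc_eq {X Y Z W : C} (g : Hom Y Z) (f : Hom X Y) (h : Hom X Z) (k : Hom W X) :
  g ⊚ f = h -> g ⊚ (f ⊚ k) = h ⊚ k.
Proof. by move=> <-; rewrite comp_assoc. Qed.

Lemma fmap_comp_comp (F : Functor C) {X Y Z W : C} (g : Hom Y Z) (f : Hom X Y) (k : Hom W (F X)) :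
  pmap F g ⊚ (pmap F f ⊚ k) = pmap F (g ⊚ f) ⊚ k.
Proof. by apply: comp_assoc_eq; rewrite fmap_comp. Qed.

End CategoryFacts.

Section Coproducts.
Context {C : Category} (S : BinCoproducts C).

Lemma copair_inl_comp {X Y Z W : C} (f : Hom X Z) (g : Hom Y Z) (k : Hom W X) :
  copair S f g ⊚ (inl_ S X Y ⊚ k) = f ⊚ k.
Proof. exact/comp_assoc_eq/copair_inl. Qed.

Lemma copair_inr_comp {X Y Z W : C} (f : Hom X Z) (g : Hom Y Z) (k : Hom W Y) :
  copair S f g ⊚ (inr_ S X Y ⊚ k) = g ⊚ k.
Proof. exact/comp_assoc_eq/copair_inr. Qed.

Lemma copair_ext {X Y Z : C} (f g : Hom (coprO S X Y) Z) :
  f ⊚ inl_ S X Y = g ⊚ inl_ S X Y -> f ⊚ inr_ S X Y = g ⊚ inr_ S X Y -> f = g.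
Proof. by move=> El Er; rewrite (copair_uniq El Er); symmetry; apply copair_uniq. Qed.

Lemma comp_copair {X Y Z W : C} (h : Hom Z W) (f : Hom X Z) (g : Hom Y Z) :
  h ⊚ copair S f g = copair S (h ⊚ f) (h ⊚ g).
Proof. by apply copair_uniq; rewrite -comp_assoc ?copair_inl ?copair_inr. Qed.

Lemma comp_copair_comp {X Y Z W U : C} (h : Hom Z W) (f : Hom X Z) (g : Hom Y Z) (k : Hom U _) :
  h ⊚ (copair S f g ⊚ k) = copair S (h ⊚ f) (h ⊚ g) ⊚ k.
Proof. exact/comp_assoc_eq/comp_copair. Qed.

(* A sealed copy of sum_mor, so that rewriting never unfolds it into a copair;
   the other derived operations below are sealed in the same way. *)
Fact sum_map_key : unit. Proof. exact: tt. Qed.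
Definition sum_map {X Y X' Y' : C} (f : Hom X X') (g : Hom Y Y') :=
  locked_with sum_map_key (sum_mor S f g).
Lemma sum_morE {X Y X' Y' : C} (f : Hom X X') (g : Hom Y Y') : sum_mor S f g = sum_map f g.
Proof. by rewrite /sum_map locked_withE. Qed.

Lemma sum_map_inl {X Y X' Y' : C} (f : Hom X X') (g : Hom Y Y') :
  sum_map f g ⊚ inl_ S X Y = inl_ S X' Y' ⊚ f.
Proof. by rewrite -sum_morE copair_inl. Qed.
Lemma sum_map_inr {X Y X' Y' : C} (f : Hom X X') (g : Hom Y Y') :
  sum_map f g ⊚ inr_ S X Y = inr_ S X' Y' ⊚ g.
Proof. by rewrite -sum_morE copair_inr. Qed.
Lemma sum_map_inl_comp {X Y X' Y' W : C} (f : Hom X X') (g : Hom Y Y') (k : Hom W X) :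
  sum_map f g ⊚ (inl_ S X Y ⊚ k) = inl_ S X' Y' ⊚ (f ⊚ k).
Proof. by rewrite comp_assoc sum_map_inl comp_assoc. Qed.
Lemma sum_map_inr_comp {X Y X' Y' W : C} (f : Hom X X') (g : Hom Y Y') (k : Hom W Y) :
  sum_map f g ⊚ (inr_ S X Y ⊚ k) = inr_ S X' Y' ⊚ (g ⊚ k).
Proof. by rewrite comp_assoc sum_map_inr comp_assoc. Qed.

Lemma copair_sum_map {X Y X' Y' Z : C} (f : Hom X' Z) (g : Hom Y' Z) (u : Hom X X') (v : Hom Y Y') :
  copair S f g ⊚ sum_map u v = copair S (f ⊚ u) (g ⊚ v).
Proof. by rewrite -sum_morE comp_copair !comp_assoc copair_inl copair_inr. Qed.
Lemma copair_sum_map_comp {X Y X' Y' Z W : C} (f : Hom X' Z) (g : Hom Y' Z)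
    (u : Hom X X') (v : Hom Y Y') (k : Hom W _) :
  copair S f g ⊚ (sum_map u v ⊚ k) = copair S (f ⊚ u) (g ⊚ v) ⊚ k.
Proof. exact/comp_assoc_eq/copair_sum_map. Qed.

Lemma sum_map_id {X Y : C} : sum_map (idm X) (idm Y) = idm _.
Proof. by rewrite -sum_morE; symmetry; apply copair_uniq; rewrite comp_idl comp_idr. Qed.

Lemma sum_map_comp {X Y X' Y' X'' Y'' : C} (u : Hom X' X'') (v : Hom Y' Y'')
    (u' : Hom X X') (v' : Hom Y Y') :
  sum_map u v ⊚ sum_map u' v' = sum_map (u ⊚ u') (v ⊚ v').
Proof.
  by apply: copair_ext; rewrite -!comp_assoc ?sum_map_inl ?sum_map_inr
    ?sum_map_inl_comp ?sum_map_inr_comp.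
Qed.
Lemma sum_map_comp_comp {X Y X' Y' X'' Y'' W : C} (u : Hom X' X'') (v : Hom Y' Y'')
    (u' : Hom X X') (v' : Hom Y Y') (k : Hom W _) :
  sum_map u v ⊚ (sum_map u' v' ⊚ k) = sum_map (u ⊚ u') (v ⊚ v') ⊚ k.
Proof. exact/comp_assoc_eq/sum_map_comp. Qed.
End Coproducts.

Ltac simpl_coprod := repeat progress rewrite -?comp_assoc ?comp_idl ?comp_idr
  -?fmap_comp ?fmap_comp_comp ?fmap_id
  ?copair_inl ?copair_inr ?copair_inl_comp ?copair_inr_comp
  ?sum_map_inl ?sum_map_inr ?sum_map_inl_comp ?sum_map_inr_comp
  ?copair_sum_map ?copair_sum_map_comp ?sum_map_comp_comp ?sum_map_id.

Ltac push_copair := rewrite ?comp_copair ?comp_copair_comp.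

Section Solutions.
Context {C : Category} (S : BinCoproducts C).

Definition is_solution {G : PreFunctor C} {A X : C} (a : Hom (G A) A)
    (e : Hom X (coprO S (G X) A)) (h : Hom X A) : Prop :=
  h = copair S a (idm A) ⊚ sum_map S (pmap G h) (idm A) ⊚ e.

Lemma is_ciaP {G : PreFunctor C} {A : C} (a : Hom (G A) A) :
  is_cia S a <-> forall X (e : Hom X (coprO S (G X) A)),
    exists h, is_solution a e h /\ forall h', is_solution a e h' -> h' = h.
Proof.
  rewrite /is_solution; split=> cia X e; case: (cia X e) => h [sol_h uniq_h].
  - by exists h; rewrite -sum_morE; split=> // h'; rewrite -sum_morE; exact: uniq_h.
  - by exists h; rewrite sum_morE; split=> // h'; rewrite sum_morE; exact: uniq_h.
Qed.

End Solutions.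

Section FunctorConstructions.
Context {C : Category} (S : BinCoproducts C).

Lemma sumF_map (F G : PreFunctor C) {X Y : C} (f : Hom X Y) :
  pmap (sumF S F G) f = sum_map S (pmap F f) (pmap G f).
Proof. exact: sum_morE. Qed.

Lemma sumF_id (F G : Functor C) (X : C) : pmap (sumF S F G) (idm X) = idm _.
Proof. by rewrite sumF_map !fmap_id sum_map_id. Qed.

Lemma sumF_comp (F G : Functor C) (X Y Z : C) (g : Hom Y Z) (f : Hom X Y) :
  pmap (sumF S F G) (g ⊚ f) = pmap (sumF S F G) g ⊚ pmap (sumF S F G) f.
Proof. by rewrite !sumF_map sum_map_comp !fmap_comp. Qed.

Definition sum_functor (F G : Functor C) : Functor C :=
  Build_Functor (sumF_id F G) (sumF_comp F G).

Lemma sum_functor_map (F G : Functor C) {X Y : C} (f : Hom X Y) :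
  pmap (sum_functor F G) f = sum_map S (pmap F f) (pmap G f).
Proof. exact: sumF_map. Qed.

Lemma compF_id (F G : Functor C) (X : C) : pmap (compF F G) (idm X) = idm _.
Proof. by rewrite /= !fmap_id. Qed.

Lemma compF_comp (F G : Functor C) (X Y Z : C) (g : Hom Y Z) (f : Hom X Y) :
  pmap (compF F G) (g ⊚ f) = pmap (compF F G) g ⊚ pmap (compF F G) f.
Proof. by rewrite /= !fmap_comp. Qed.

Definition comp_functor (F G : Functor C) : Functor C :=
  Build_Functor (compF_id F G) (compF_comp F G).

End FunctorConstructions.

Section IterativeMonad.
Context {C : Category} {S : BinCoproducts C} {G : Functor C} (It : Iteratable S G).

Local Notation T := (TG It).
Local Notation tout := (tout It).
Local Notation tinv := (tinv It).
Local Notation inl := (inl_ S _ _).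
Local Notation inr := (inr_ S _ _).
Local Notation "f ⊕ g" := (sum_map S f g) (at level 35).

Fact tauT_key : unit. Proof. exact: tt. Qed.
Definition tauT X : Hom (G (T X)) (T X) := locked_with tauT_key (tau It X).
Lemma tauE X : tau It X = tauT X. Proof. by rewrite /tauT locked_withE. Qed.

Fact etaT_key : unit. Proof. exact: tt. Qed.
Definition etaT X : Hom X (T X) := locked_with etaT_key (teta It X).
Lemma etaE X : teta It X = etaT X. Proof. by rewrite /etaT locked_withE. Qed.

Fact muT_key : unit. Proof. exact: tt. Qed.
Definition muT X : Hom (T (T X)) (T X) := locked_with muT_key (mu It X).
Lemma muE X : mu It X = muT X. Proof. by rewrite /muT locked_withE. Qed.

Fact kappaT_key : unit. Proof. exact: tt. Qed.
Definition kappaT X : Hom (G X) (T X) := locked_with kappaT_key (kappa It X).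
Lemma kappaE X : kappa It X = kappaT X. Proof. by rewrite /kappaT locked_withE. Qed.

Lemma kappaT_def X : kappaT X = tauT X ⊚ pmap G (etaT X).
Proof. by rewrite -kappaE -tauE -etaE. Qed.

Lemma tout_tinv_comp {X W} (k : Hom W _) : tout X ⊚ (tinv X ⊚ k) = k.
Proof. by rewrite comp_assoc tinv_r comp_idl. Qed.
Lemma tinv_tout_comp {X W} (k : Hom W _) : tinv X ⊚ (tout X ⊚ k) = k.
Proof. by rewrite comp_assoc tinv_l comp_idl. Qed.

Lemma tout_tauT X : tout X ⊚ tauT X = inl.
Proof. by rewrite -tauE /tau tout_tinv_comp. Qed.
Lemma tout_etaT X : tout X ⊚ etaT X = inr.
Proof. by rewrite -etaE /teta tout_tinv_comp. Qed.
Lemma tout_tauT_comp {X W} (k : Hom W _) : tout X ⊚ (tauT X ⊚ k) = inl ⊚ k.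
Proof. exact/comp_assoc_eq/tout_tauT. Qed.
Lemma tout_etaT_comp {X W} (k : Hom W _) : tout X ⊚ (etaT X ⊚ k) = inr ⊚ k.
Proof. exact/comp_assoc_eq/tout_etaT. Qed.

Lemma tinv_copair X : tinv X = copair S (tauT X) (etaT X).
Proof. by rewrite -tauE -etaE; apply: copair_uniq. Qed.

Lemma tout_inj X W (h1 h2 : Hom W (T X)) : tout X ⊚ h1 = tout X ⊚ h2 -> h1 = h2.
Proof. by move=> E; rewrite -(tinv_tout_comp h1) E tinv_tout_comp. Qed.

End IterativeMonad.

Ltac simpl_T := repeat progress (simpl_coprod; rewrite
  ?tout_tauT ?tout_etaT ?tout_tauT_comp ?tout_etaT_comp).

Section IterativeMonadLaws.
Context {C : Category} {S : BinCoproducts C} {G : Functor C} (It : Iteratable S G).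

Local Notation T := (TG It).
Local Notation tout := (tout It).
Local Notation tinv := (tinv It).
Local Notation inl := (inl_ S _ _).
Local Notation inr := (inr_ S _ _).
Local Notation "f ⊕ g" := (sum_map S f g) (at level 35).
Local Notation tauT := (tauT It).
Local Notation etaT := (etaT It).
Local Notation muT := (muT It).
Local Notation kappaT := (kappaT It).

Lemma tunfold_specE X A (al : Hom A (coprO S (G A) X)) :
  tout X ⊚ tunfold It al = pmap G (tunfold It al) ⊕ idm X ⊚ al.
Proof. by rewrite -sum_morE tunfold_spec. Qed.

Lemma T_coalg_hom_eq {X A} {al : Hom A (coprO S (G A) X)} {h1 h2 : Hom A (T X)} :
  tout X ⊚ h1 = pmap G h1 ⊕ idm X ⊚ al -> tout X ⊚ h2 = pmap G h2 ⊕ idm X ⊚ al ->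
  h1 = h2.
Proof.
  by rewrite -!sum_morE => /tunfold_uniq -> /tunfold_uniq ->.
Qed.

Lemma is_solution_tout {X Y} (e : Hom Y (coprO S (G Y) (T X))) (h : Hom Y (T X)) :
  is_solution S (tauT X) e h <-> tout X ⊚ h = copair S (inl ⊚ pmap G h) (tout X) ⊚ e.
Proof.
  rewrite /is_solution; split=> E; [rewrite {1}E | apply: tout_inj; rewrite E];
    by simpl_T; push_copair; simpl_T.
Qed.

(* For a solution h, [h, id] : Y + T X -> T X is a coalgebra morphism out of a
   coalgebra on Y + T X that depends only on e. *)
Lemma T_solution_unique {X Y} {e : Hom Y (coprO S (G Y) (T X))} {h1 h2 : Hom Y (T X)} :
  is_solution S (tauT X) e h1 -> is_solution S (tauT X) e h2 -> h1 = h2.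
Proof.
  move=> /is_solution_tout E1 /is_solution_tout E2.
  pose z2 := pmap G (inr_ S Y (T X)) ⊕ idm X ⊚ tout X.
  pose al := copair S (copair S (inl ⊚ pmap G (inl_ S Y (T X))) z2 ⊚ e) z2.
  have hom_al h : tout X ⊚ h = copair S (inl ⊚ pmap G h) (tout X) ⊚ e ->
      tout X ⊚ copair S h (idm _) = pmap G (copair S h (idm _)) ⊕ idm X ⊚ al.
    move=> Eh; apply: copair_ext; rewrite /al /z2; simpl_T => //.
    by rewrite Eh; push_copair; simpl_T.
  have := T_coalg_hom_eq (hom_al _ E1) (hom_al _ E2).
  by move=> /(f_equal (fun h => h ⊚ inl_ S Y (T X))); rewrite !copair_inl.
Qed.

Lemma muT_tout X : tout X ⊚ muT X = copair S (inl ⊚ pmap G (muT X)) (tout X) ⊚ tout (T X).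
Proof.
  rewrite -muE /mu /= !sum_morE; set U := tunfold It _.
  have U_inr : U ⊚ inr = idm _.
    apply: (T_coalg_hom_eq (al := tout X)); last by simpl_T.
    by rewrite /U comp_assoc tunfold_specE; simpl_T.
  rewrite comp_assoc {1}/U tunfold_specE -/U; simpl_T; push_copair; simpl_T.
  by rewrite U_inr; simpl_T.
Qed.

Lemma muT_solution X : is_solution S (tauT X) (tout (T X)) (muT X).
Proof. exact/is_solution_tout/muT_tout. Qed.

Lemma muT_def X : muT X = copair S (tauT X ⊚ pmap G (muT X)) (idm _) ⊚ tout (T X).
Proof. by rewrite {1}(muT_solution X); simpl_T. Qed.

Lemma muT_tauT X : muT X ⊚ tauT (T X) = tauT X ⊚ pmap G (muT X).
Proof. by rewrite {1}muT_def; simpl_T. Qed.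
Lemma muT_etaT X : muT X ⊚ etaT (T X) = idm _.
Proof. by rewrite {1}muT_def; simpl_T. Qed.

Lemma Tmap_tout {X Y} (f : Hom X Y) : tout Y ⊚ Tmap It f = pmap G (Tmap It f) ⊕ f ⊚ tout X.
Proof. by rewrite /Tmap tunfold_specE sum_morE; simpl_T. Qed.

Lemma Tmap_tauT {X Y} (f : Hom X Y) : Tmap It f ⊚ tauT X = tauT Y ⊚ pmap G (Tmap It f).
Proof. by apply: tout_inj; rewrite comp_assoc Tmap_tout; simpl_T. Qed.
Lemma Tmap_etaT {X Y} (f : Hom X Y) : Tmap It f ⊚ etaT X = etaT Y ⊚ f.
Proof. by apply: tout_inj; rewrite comp_assoc Tmap_tout; simpl_T. Qed.

Lemma muT_nat {X Y} (f : Hom X Y) : muT Y ⊚ Tmap It (Tmap It f) = Tmap It f ⊚ muT X.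
Proof.
  apply: (T_solution_unique (e := idm _ ⊕ Tmap It f ⊚ tout (T X))); rewrite /is_solution.
  - by rewrite {1}muT_def -!comp_assoc Tmap_tout; simpl_T.
  - by rewrite {1}muT_def; simpl_T; push_copair; rewrite comp_assoc Tmap_tauT; simpl_T.
Qed.

Lemma muT_Tmap_etaT X : muT X ⊚ Tmap It (etaT X) = idm _.
Proof.
  apply: (T_solution_unique (e := idm _ ⊕ etaT X ⊚ tout X)); rewrite /is_solution.
  - by rewrite {1}muT_def -!comp_assoc Tmap_tout; simpl_T.
  - by simpl_T; rewrite -{1}(tinv_l It X) tinv_copair.
Qed.

Lemma muT_assoc X : muT X ⊚ Tmap It (muT X) = muT X ⊚ muT (T X).
Proof.
  apply: (T_solution_unique (e := idm _ ⊕ muT X ⊚ tout (T (T X)))); rewrite /is_solution.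
  - by rewrite {1}muT_def -!comp_assoc Tmap_tout; simpl_T.
  - apply: tout_inj; rewrite comp_assoc muT_tout -comp_assoc muT_tout; simpl_T.
    by push_copair; simpl_T; rewrite muT_tout.
Qed.

Lemma muT_kappaT X : muT X ⊚ kappaT (T X) = tauT X.
Proof.
  by rewrite kappaT_def comp_assoc muT_tauT -comp_assoc -fmap_comp muT_etaT fmap_id comp_idr.
Qed.

Lemma kappaT_nat {X Y} (f : Hom X Y) : Tmap It f ⊚ kappaT X = kappaT Y ⊚ pmap G f.
Proof. by rewrite !kappaT_def comp_assoc Tmap_tauT -!comp_assoc -!fmap_comp Tmap_etaT. Qed.

End IterativeMonadLaws.

Section GuardedSchemes.
Context {C : Category} {S : BinCoproducts C} {L V : Functor C}.
Local Notation G := (sum_functor S L V).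
Context {It : Iteratable S G} {A : C} {a : Hom (L A) A} (a_cia : is_cia S a).
Context {f : forall X, Hom (V X) (L (TG It X))}.
Hypothesis f_nat : forall X Y (g : Hom X Y), pmap L (Tmap It g) ⊚ f X = f Y ⊚ pmap V g.

Local Notation T := (TG It).
Local Notation tout := (tout It).
Local Notation Tm := (Tmap It).
Local Notation tau := (tauT It).
Local Notation teta := (etaT It).
Local Notation mu := (muT It).
Local Notation kappa := (kappaT It).
Local Notation inl := (inl_ S _ _).
Local Notation inr := (inr_ S _ _).

Lemma f_natE {X Y} (g : Hom X Y) : f Y ⊚ pmap V g = pmap L (Tm g) ⊚ f X.
Proof. by rewrite f_nat. Qed.

Ltac simpl_rps := repeat progress (rewrite ?sum_functor_map; simpl_T; push_copair).

Lemma L_solution_exists {X} (E : Hom X (coprO S (L X) A)) : exists h, is_solution S a E h.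
Proof. by have [h [sol_h _]] := proj1 (is_ciaP S a) a_cia X E; exists h. Qed.

Lemma L_solution_unique {X} {E : Hom X (coprO S (L X) A)} {h1 h2} :
  is_solution S a E h1 -> is_solution S a E h2 -> h1 = h2.
Proof.
  have [h [_ uniq_h]] := proj1 (is_ciaP S a) a_cia X E.
  by move=> /uniq_h -> /uniq_h ->.
Qed.

(* The L-flat equation evaluating terms: an L-node is kept, a V-node is unfolded
   by f and flattened by mu, and a variable is sent along h. *)
Definition term_eqn {X} (h : Hom X A) : Hom (T X) (coprO S (L (T X)) A) :=
  copair S (copair S inl (inl ⊚ pmap L (mu X) ⊚ f (T X))) (inr ⊚ h) ⊚ tout X.

Lemma term_eqn_Tmap {beta : Hom (T A) A} : is_solution S a (term_eqn (idm A)) beta ->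
  forall X (h : Hom X A), is_solution S a (term_eqn h) (beta ⊚ Tm h).
Proof.
  move=> beta_sol X h; rewrite /is_solution {1}beta_sol /term_eqn.
  simpl_rps; rewrite Tmap_tout; simpl_rps; rewrite f_natE; simpl_rps.
  by rewrite muT_nat.
Qed.

Lemma EM_algebra_term_eqn {beta : Hom (T A) A} {s : Hom (V A) A} :
  is_EM_algebra (It := It) beta -> beta ⊚ kappa A = copair S a s ->
  s = beta ⊚ (tau A ⊚ (inl ⊚ f A)) -> is_solution S a (term_eqn (idm A)) beta.
Proof.
  rewrite /is_EM_algebra etaE muE => -[beta_eta beta_mu] beta_kappa s_def.
  have beta_tau : beta ⊚ tau A = copair S a s ⊚ pmap G beta.
    by rewrite -muT_kappaT comp_assoc beta_mu -comp_assoc kappaT_nat comp_assoc beta_kappa.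
  have s_beta : s ⊚ pmap V beta = a ⊚ (pmap L (beta ⊚ mu A) ⊚ f (T A)).
    rewrite {1}s_def -!comp_assoc (comp_assoc beta) beta_tau; simpl_rps.
    by rewrite f_natE; simpl_rps; rewrite beta_mu.
  rewrite /is_solution -{1}(comp_idr beta) -(tinv_l It A) tinv_copair comp_assoc comp_copair.
  by rewrite beta_tau beta_eta /term_eqn; simpl_rps; rewrite s_beta.
Qed.

Definition beta_scheme (beta : Hom (T A) A) : Hom (V A) A := beta ⊚ (tau A ⊚ (inl ⊚ f A)).

Section Evaluation.
Context {beta : Hom (T A) A} (beta_sol : is_solution S a (term_eqn (idm A)) beta).

Lemma beta_tauT : beta ⊚ tau A =
  copair S (a ⊚ pmap L beta) (a ⊚ (pmap L (beta ⊚ mu A) ⊚ f (T A))).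
Proof. by rewrite {1}beta_sol /term_eqn; simpl_rps. Qed.

Lemma beta_etaT : beta ⊚ teta A = idm A.
Proof. by rewrite {1}beta_sol /term_eqn; simpl_rps. Qed.

Lemma beta_schemeE : beta_scheme beta = a ⊚ (pmap L beta ⊚ f A).
Proof. by rewrite /beta_scheme comp_assoc beta_tauT; simpl_rps. Qed.

Lemma beta_mu_unfold :
  beta ⊚ mu A = copair S (beta ⊚ (tau A ⊚ pmap G (mu A))) beta ⊚ tout (T A).
Proof.
  by rewrite -{1}(tinv_tout_comp It (mu A)) muT_tout comp_copair_comp tinv_l tinv_copair; simpl_rps.
Qed.

Lemma beta_EM : is_EM_algebra (It := It) beta.
Proof.
  rewrite /is_EM_algebra etaE muE; split; first exact: beta_etaT.
  apply: (L_solution_unique (E := term_eqn beta)); last exact: term_eqn_Tmap.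
  rewrite /is_solution {1}beta_mu_unfold comp_assoc beta_tauT /term_eqn; simpl_rps.
  by rewrite f_natE; simpl_rps; rewrite muT_assoc.
Qed.

Lemma beta_kappaT : beta ⊚ kappa A = copair S a (beta_scheme beta).
Proof.
  rewrite kappaT_def comp_assoc beta_tauT; simpl_rps.
  rewrite beta_etaT fmap_id comp_idr f_natE; simpl_rps.
  by rewrite muT_Tmap_etaT comp_idr beta_schemeE.
Qed.

Lemma sum_solutionE {X} (ee : Hom X (coprO S (G X) A)) (h : Hom X A) :
  is_solution (G := G) S (copair S a (beta_scheme beta)) ee h <->
  h = copair S (copair S (a ⊚ pmap L h) (a ⊚ (pmap L (beta ⊚ Tm h) ⊚ f X))) (idm A) ⊚ ee.
Proof. by rewrite /is_solution beta_schemeE; simpl_rps; rewrite f_natE; simpl_rps. Qed.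

(* A (L + V)-flat equation ee over X is solved through one L-flat equation over
   X + T X: V-nodes are unfolded by f into L-nodes over terms, and terms are
   evaluated as in term_eqn, with variables resolved by the first component. *)
Lemma sum_cia : is_cia S (G := G) (copair S a (beta_scheme beta)).
Proof.
  apply/is_ciaP => X ee.
  pose W1 := copair S (copair S (inl ⊚ pmap L (inl_ S X (T X)))
    (inl ⊚ (pmap L (inr_ S X (T X)) ⊚ f X))) inr ⊚ ee.
  pose W2 := copair S (copair S (inl ⊚ pmap L (inr_ S X (T X)))
    (inl ⊚ (pmap L (inr_ S X (T X) ⊚ mu X) ⊚ f (T X)))) W1 ⊚ tout X.
  have [g sol_g] := L_solution_exists (copair S W1 W2).
  have g_inl g' : is_solution S a (copair S W1 W2) g' -> g' ⊚ inl =
      copair S (copair S (a ⊚ pmap L (g' ⊚ inl)) (a ⊚ (pmap L (g' ⊚ inr) ⊚ f X))) (idm A)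
      ⊚ ee.
    by move=> sol_g'; rewrite {1}sol_g' /W1; simpl_rps.
  have g_inr g' : is_solution S a (copair S W1 W2) g' -> g' ⊚ inr = beta ⊚ Tm (g' ⊚ inl).
    move=> sol_g'; apply: (L_solution_unique (E := term_eqn (g' ⊚ inl)));
      last exact: term_eqn_Tmap.
    by rewrite /is_solution {1}sol_g' (g_inl g' sol_g') /W2 /term_eqn; simpl_rps;
      rewrite (g_inl g' sol_g').
  exists (g ⊚ inl); split.
    by apply/sum_solutionE; rewrite {1}(g_inl g sol_g) (g_inr g sol_g).
  move=> h /sum_solutionE sol_h.
  have sol_pair : is_solution S a (copair S W1 W2) (copair S h (beta ⊚ Tm h)).
    apply: copair_ext; first by rewrite /W1; simpl_rps.
    have := term_eqn_Tmap beta_sol _ h; rewrite /is_solution /term_eqn => {1}->.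
    by rewrite /W2; simpl_rps; rewrite -sol_h.
  by rewrite -(copair_inl S h (beta ⊚ Tm h)) (L_solution_unique sol_pair sol_g).
Qed.

End Evaluation.

Lemma guarded_solution (e : forall X, Hom (V X) (T X))
    (e_def : forall X, e X = tau X ⊚ (inl ⊚ f X)) :
  exists s : Hom (V A) A,
    is_interpreted_solution e a s /\
    (forall s', is_interpreted_solution e a s' -> s' = s) /\
    is_cia S (G := G) (copair S a s).
Proof.
  have [beta beta_sol] := L_solution_exists (term_eqn (idm A)).
  exists (beta_scheme beta); split; [|split].
  - exists beta; split; first exact: beta_EM beta_sol.
    by rewrite (kappaE It) (beta_kappaT beta_sol) e_def.
  - move=> s' [beta' [EM_beta' [beta'_kappa s'_def]]].
    rewrite (kappaE It) e_def in beta'_kappa s'_def.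
    have := EM_algebra_term_eqn EM_beta' beta'_kappa s'_def.
    by move=> /(L_solution_unique beta_sol) ->; rewrite s'_def.
  - exact: sum_cia beta_sol.
Qed.

End GuardedSchemes.

Theorem guarded_scheme_solution {C : Category} (S : BinCoproducts C) (L V : Functor C)
    (It : Iteratable S (sum_functor S L V)) {A : C} {a : Hom (L A) A} (a_cia : is_cia S a)
    (e : forall X, Hom (V X) (TG It X)) (e_guarded : is_guarded e) :
  exists s : Hom (V A) A,
    is_interpreted_solution e a s /\
    (forall s', is_interpreted_solution e a s' -> s' = s) /\
    is_cia S (G := sum_functor S L V) (copair S a s).
Proof.
  case: e_guarded => f [f_nat e_def].
  by apply: (guarded_solution a_cia f_nat) => X; rewrite e_def (tauE It) comp_assoc.
Qed.

Section Products.
Context {C : Category} (P : BinProducts C).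

Lemma pairing_ext {Z X Y : C} (h h' : Hom Z (prodO P X Y)) :
  pi1 P X Y ⊚ h = pi1 P X Y ⊚ h' -> pi2 P X Y ⊚ h = pi2 P X Y ⊚ h' -> h = h'.
Proof. by move=> E1 E2; rewrite (pairing_uniq E1 E2); symmetry; apply: pairing_uniq. Qed.

Lemma pairing_eta {Z X Y : C} (h : Hom Z (prodO P X Y)) :
  pairing P (pi1 P X Y ⊚ h) (pi2 P X Y ⊚ h) = h.
Proof. by symmetry; apply: pairing_uniq. Qed.

Lemma pairing_comp {Z X Y W : C} (f : Hom Z X) (g : Hom Z Y) (k : Hom W Z) :
  pairing P f g ⊚ k = pairing P (f ⊚ k) (g ⊚ k).
Proof. by apply: pairing_uniq; rewrite comp_assoc ?pairing_pi1 ?pairing_pi2. Qed.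

Fact prod_map_key : unit. Proof. exact: tt. Qed.
Definition prod_map {X Y X' Y' : C} (f : Hom X X') (g : Hom Y Y') :=
  locked_with prod_map_key (prod_mor P f g).
Lemma prod_morE {X Y X' Y' : C} (f : Hom X X') (g : Hom Y Y') : prod_mor P f g = prod_map f g.
Proof. by rewrite /prod_map locked_withE. Qed.

Lemma pi1_prod_map {X Y X' Y' : C} (u : Hom X X') (v : Hom Y Y') :
  pi1 P X' Y' ⊚ prod_map u v = u ⊚ pi1 P X Y.
Proof. by rewrite -prod_morE pairing_pi1. Qed.
Lemma pi2_prod_map {X Y X' Y' : C} (u : Hom X X') (v : Hom Y Y') :
  pi2 P X' Y' ⊚ prod_map u v = v ⊚ pi2 P X Y.
Proof. by rewrite -prod_morE pairing_pi2. Qed.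
Lemma pi1_prod_map_comp {X Y X' Y' W : C} (u : Hom X X') (v : Hom Y Y') (k : Hom W _) :
  pi1 P X' Y' ⊚ (prod_map u v ⊚ k) = u ⊚ (pi1 P X Y ⊚ k).
Proof. by rewrite comp_assoc pi1_prod_map comp_assoc. Qed.
Lemma pi2_prod_map_comp {X Y X' Y' W : C} (u : Hom X X') (v : Hom Y Y') (k : Hom W _) :
  pi2 P X' Y' ⊚ (prod_map u v ⊚ k) = v ⊚ (pi2 P X Y ⊚ k).
Proof. by rewrite comp_assoc pi2_prod_map comp_assoc. Qed.

Lemma prod_map_pairing {Z X Y X' Y' : C} (u : Hom X X') (v : Hom Y Y') (f : Hom Z X) (g : Hom Z Y) :
  prod_map u v ⊚ pairing P f g = pairing P (u ⊚ f) (v ⊚ g).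
Proof.
  by apply: pairing_uniq; rewrite comp_assoc ?pi1_prod_map ?pi2_prod_map -comp_assoc
    ?pairing_pi1 ?pairing_pi2.
Qed.
End Products.

Ltac simpl_prod := repeat progress rewrite -?comp_assoc ?comp_idl ?comp_idr
  -?fmap_comp ?fmap_comp_comp ?fmap_id
  ?pairing_pi1 ?pairing_pi2
  ?pi1_prod_map ?pi2_prod_map ?pi1_prod_map_comp ?pi2_prod_map_comp
  ?prod_map_pairing ?pairing_comp.

Section FreeMonad.
Context {C : Category} {K : Functor C} (FA : FreeAlgebras K).

Local Notation M := (Mo FA).
Local Notation eta := (eta FA).
Local Notation phi := (phi FA).

Fact Mmap_key : unit. Proof. exact: tt. Qed.
Definition Mmap {X Y : C} (f : Hom X Y) : Hom (M X) (M Y) :=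
  locked_with Mmap_key (pmap (MF FA) f).
Lemma MmapE {X Y : C} (f : Hom X Y) : pmap (MF FA) f = Mmap f.
Proof. by rewrite /Mmap locked_withE. Qed.

Fact sharpM_key : unit. Proof. exact: tt. Qed.
Definition sharpM {A : C} (a : Hom (K A) A) : Hom (M A) A := locked_with sharpM_key (sharp FA a).
Lemma sharpE {A : C} (a : Hom (K A) A) : sharp FA a = sharpM a.
Proof. by rewrite /sharpM locked_withE. Qed.

Lemma Mmap_def {X Y} (f : Hom X Y) : Mmap f = fext FA (phi Y) (eta Y ⊚ f).
Proof. by rewrite -MmapE. Qed.
Lemma sharpM_def {A} (a : Hom (K A) A) : sharpM a = fext FA a (idm A).
Proof. by rewrite -sharpE. Qed.

Lemma free_hom_eq {X A} (a : Hom (K A) A) (h1 h2 : Hom (M X) A) :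
  h1 ⊚ phi X = a ⊚ pmap K h1 -> h2 ⊚ phi X = a ⊚ pmap K h2 ->
  h1 ⊚ eta X = h2 ⊚ eta X -> h1 = h2.
Proof. by move=> E1 E2 E3; rewrite (fext_uniq E1 E3); symmetry; apply: fext_uniq. Qed.

Lemma Mmap_eta {X Y} (f : Hom X Y) : Mmap f ⊚ eta X = eta Y ⊚ f.
Proof. by rewrite Mmap_def fext_eta. Qed.
Lemma Mmap_phi {X Y} (f : Hom X Y) : Mmap f ⊚ phi X = phi Y ⊚ pmap K (Mmap f).
Proof. by rewrite Mmap_def fext_hom. Qed.
Lemma sharpM_eta {A} (a : Hom (K A) A) : sharpM a ⊚ eta A = idm A.
Proof. by rewrite sharpM_def fext_eta. Qed.
Lemma sharpM_phi {A} (a : Hom (K A) A) : sharpM a ⊚ phi A = a ⊚ pmap K (sharpM a).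
Proof. by rewrite sharpM_def fext_hom. Qed.

Lemma Mmap_eta_comp {X Y W} (f : Hom X Y) (k : Hom W X) :
  Mmap f ⊚ (eta X ⊚ k) = eta Y ⊚ (f ⊚ k).
Proof. by rewrite comp_assoc Mmap_eta comp_assoc. Qed.
Lemma Mmap_phi_comp {X Y W} (f : Hom X Y) (k : Hom W _) :
  Mmap f ⊚ (phi X ⊚ k) = phi Y ⊚ (pmap K (Mmap f) ⊚ k).
Proof. by rewrite comp_assoc Mmap_phi comp_assoc. Qed.
Lemma sharpM_eta_comp {A W} (a : Hom (K A) A) (k : Hom W A) : sharpM a ⊚ (eta A ⊚ k) = k.
Proof. by rewrite comp_assoc sharpM_eta comp_idl. Qed.
Lemma sharpM_phi_comp {A W} (a : Hom (K A) A) (k : Hom W _) :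
  sharpM a ⊚ (phi A ⊚ k) = a ⊚ (pmap K (sharpM a) ⊚ k).
Proof. by rewrite comp_assoc sharpM_phi comp_assoc. Qed.

Lemma alg_hom_fext {X A B} {a : Hom (K A) A} {b : Hom (K B) B} {g : Hom A B} (h : Hom X A) :
  g ⊚ a = b ⊚ pmap K g -> g ⊚ fext FA a h = fext FA b (g ⊚ h).
Proof.
  move=> g_hom; apply: fext_uniq; last by rewrite -comp_assoc fext_eta.
  by rewrite -comp_assoc fext_hom comp_assoc g_hom -comp_assoc -fmap_comp.
Qed.

Lemma fext_Mmap {X Y A} (a : Hom (K A) A) (h : Hom Y A) (g : Hom X Y) :
  fext FA a h ⊚ Mmap g = fext FA a (h ⊚ g).
Proof.
  apply: fext_uniq; last by rewrite -comp_assoc Mmap_eta comp_assoc fext_eta.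
  by rewrite -comp_assoc Mmap_phi comp_assoc fext_hom -comp_assoc -fmap_comp.
Qed.

Lemma fextE {X A} (a : Hom (K A) A) (h : Hom X A) : fext FA a h = sharpM a ⊚ Mmap h.
Proof. by rewrite sharpM_def fext_Mmap comp_idl. Qed.

Lemma Mmap_id X : Mmap (idm X) = idm (M X).
Proof.
  by rewrite Mmap_def comp_idr; symmetry; apply: fext_uniq; rewrite ?fmap_id comp_idl ?comp_idr.
Qed.

Lemma Mmap_comp {X Y Z} (g : Hom Y Z) (f : Hom X Y) : Mmap g ⊚ Mmap f = Mmap (g ⊚ f).
Proof. by rewrite {1}Mmap_def fext_Mmap -comp_assoc -Mmap_def. Qed.

Lemma alg_hom_sharpM {A B} {a : Hom (K A) A} {b : Hom (K B) B} {g : Hom A B} :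
  g ⊚ a = b ⊚ pmap K g -> g ⊚ sharpM a = sharpM b ⊚ Mmap g.
Proof. by move=> g_hom; rewrite sharpM_def (alg_hom_fext _ g_hom) comp_idr fextE. Qed.

Definition muM X : Hom (M (M X)) (M X) := sharpM (phi X).

Lemma muM_eta X : muM X ⊚ eta (M X) = idm _. Proof. exact: sharpM_eta. Qed.
Lemma muM_phi X : muM X ⊚ phi (M X) = phi X ⊚ pmap K (muM X). Proof. exact: sharpM_phi. Qed.

Lemma muM_Mmap_eta X : muM X ⊚ Mmap (eta X) = idm _.
Proof.
  rewrite /muM sharpM_def fext_Mmap comp_idl; symmetry.
  by apply: fext_uniq; rewrite ?fmap_id comp_idl ?comp_idr.
Qed.

Lemma muM_nat {X Y} (f : Hom X Y) : Mmap f ⊚ muM X = muM Y ⊚ Mmap (Mmap f).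
Proof. exact/alg_hom_sharpM/Mmap_phi. Qed.
Lemma muM_assoc X : muM X ⊚ muM (M X) = muM X ⊚ Mmap (muM X).
Proof. exact/alg_hom_sharpM/muM_phi. Qed.
Lemma sharpM_muM {A} (a : Hom (K A) A) : sharpM a ⊚ muM A = sharpM a ⊚ Mmap (sharpM a).
Proof. exact/alg_hom_sharpM/sharpM_phi. Qed.

Lemma sharpM_Mmap_muM {A Z} (a : Hom (K A) A) (j : Hom Z A) :
  sharpM a ⊚ Mmap (sharpM a ⊚ Mmap j) = sharpM a ⊚ (Mmap j ⊚ muM Z).
Proof. by rewrite -Mmap_comp comp_assoc -sharpM_muM -comp_assoc muM_nat. Qed.

Lemma MF_id X : pmap (MF FA) (idm X) = idm _.
Proof. by rewrite MmapE Mmap_id. Qed.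
Lemma MF_comp X Y Z (g : Hom Y Z) (f : Hom X Y) :
  pmap (MF FA) (g ⊚ f) = pmap (MF FA) g ⊚ pmap (MF FA) f.
Proof. by rewrite !MmapE Mmap_comp. Qed.

Definition free_functor : Functor C := Build_Functor MF_id MF_comp.

End FreeMonad.

Definition MHM_functor {C : Category} {K : Functor C} (FA : FreeAlgebras K) (H : Functor C) :
  Functor C := comp_functor (free_functor FA) (comp_functor H (free_functor FA)).

Ltac simpl_M := repeat progress (simpl_prod; rewrite ?Mmap_eta ?Mmap_eta_comp
  ?sharpM_eta ?sharpM_eta_comp ?Mmap_comp).

Section GSOSExtension.
Context {C : Category} (P : BinProducts C) {K H : Functor C} {FA : FreeAlgebras K}.
Context (ell : forall X, Hom (K (prodO P (H X) X)) (H (Mo FA X))).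
Hypothesis ell_nat : is_GSOS_rule (P := P) ell.

Local Notation M := (Mo FA).
Local Notation eta := (eta FA).
Local Notation phi := (phi FA).
Local Notation Mmap := (Mmap FA).
Local Notation muM := (muM FA).
Local Notation "f ⊗ g" := (prod_map P f g) (at level 35).
Local Notation π1 := (pi1 P _ _).
Local Notation π2 := (pi2 P _ _).

Lemma ell_natE {X Y} (f : Hom X Y) :
  ell Y ⊚ pmap K (pmap H f ⊗ f) = pmap H (Mmap f) ⊚ ell X.
Proof. by rewrite -prod_morE ell_nat -MmapE. Qed.
Lemma ell_natE_comp {X Y W} (f : Hom X Y) (k : Hom W _) :
  ell Y ⊚ (pmap K (pmap H f ⊗ f) ⊚ k) = pmap H (Mmap f) ⊚ (ell X ⊚ k).
Proof. by rewrite comp_assoc ell_natE comp_assoc. Qed.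

Definition ell_alg X : Hom (K (prodO P (H (M X)) (M X))) (prodO P (H (M X)) (M X)) :=
  pairing P (pmap H (muM X) ⊚ ell (M X)) (phi X ⊚ pmap K π2).

Definition rho X : Hom (M (prodO P (H X) X)) (prodO P (H (M X)) (M X)) :=
  fext FA (ell_alg X) (pairing P (pmap H (eta X) ⊚ π1) (eta X ⊚ π2)).

Lemma rho_eta X : rho X ⊚ eta _ = pairing P (pmap H (eta X) ⊚ π1) (eta X ⊚ π2).
Proof. exact: fext_eta. Qed.
Lemma rho_eta_comp {X W} (k : Hom W _) :
  rho X ⊚ (eta _ ⊚ k) = pairing P (pmap H (eta X) ⊚ π1) (eta X ⊚ π2) ⊚ k.
Proof. exact/comp_assoc_eq/rho_eta. Qed.
Lemma rho_phi X : rho X ⊚ phi _ = ell_alg X ⊚ pmap K (rho X).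
Proof. exact: fext_hom. Qed.

Lemma pi2_rho X : π2 ⊚ rho X = Mmap (pi2 P (H X) X).
Proof.
  apply: (free_hom_eq FA (phi X)).
  - by rewrite -comp_assoc rho_phi /ell_alg; simpl_M.
  - exact: Mmap_phi.
  - by rewrite -comp_assoc rho_eta Mmap_eta; simpl_M.
Qed.

Lemma ell_alg_nat {X Y} (f : Hom X Y) :
  pmap H (Mmap f) ⊗ Mmap f ⊚ ell_alg X = ell_alg Y ⊚ pmap K (pmap H (Mmap f) ⊗ Mmap f).
Proof.
  rewrite /ell_alg; simpl_M; rewrite ?ell_natE ?ell_natE_comp; simpl_M.
  by rewrite muM_nat Mmap_phi_comp; simpl_M.
Qed.

Lemma rho_nat {X Y} (f : Hom X Y) :
  rho Y ⊚ Mmap (pmap H f ⊗ f) = pmap H (Mmap f) ⊗ Mmap f ⊚ rho X.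
Proof.
  apply: (free_hom_eq FA (ell_alg Y)).
  - by rewrite -comp_assoc Mmap_phi comp_assoc rho_phi -comp_assoc -fmap_comp.
  - by rewrite -comp_assoc rho_phi comp_assoc ell_alg_nat -comp_assoc -fmap_comp.
  - by rewrite -comp_assoc Mmap_eta comp_assoc rho_eta -comp_assoc rho_eta; simpl_M.
Qed.

Lemma ell_alg_muM X :
  pmap H (muM X) ⊗ muM X ⊚ ell_alg (M X) = ell_alg X ⊚ pmap K (pmap H (muM X) ⊗ muM X).
Proof.
  rewrite /ell_alg; simpl_M; rewrite ?ell_natE ?ell_natE_comp; simpl_M.
  by rewrite muM_assoc comp_assoc muM_phi; simpl_M.
Qed.

Lemma rho_muM X :
  rho X ⊚ muM (prodO P (H X) X) = pmap H (muM X) ⊗ muM X ⊚ rho (M X) ⊚ Mmap (rho X).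
Proof.
  apply: (free_hom_eq FA (ell_alg X)).
  - by rewrite -comp_assoc muM_phi comp_assoc rho_phi -comp_assoc -fmap_comp.
  - rewrite -!comp_assoc Mmap_phi (comp_assoc (rho (M X))) rho_phi -comp_assoc.
    by rewrite (comp_assoc (_ ⊗ _)) ell_alg_muM -!comp_assoc -!fmap_comp.
  - rewrite -comp_assoc muM_eta comp_idr -!comp_assoc Mmap_eta (comp_assoc (rho (M X))) rho_eta.
    by simpl_M; rewrite pairing_eta.
Qed.

End GSOSExtension.

Section Interpretation.
Context {C : Category} (P : BinProducts C) {K H : Functor C} {FA : FreeAlgebras K}.
Context {ell : forall X, Hom (K (prodO P (H X) X)) (H (Mo FA X))}.
Hypothesis ell_nat : is_GSOS_rule (P := P) ell.
Context (Tc : TerminalCoalgebra H) (b : Hom (K (tc_obj Tc)) (tc_obj Tc)).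
Hypothesis b_eqn : tc_str Tc ⊚ b =
  pmap H (sharp FA b) ⊚ ell (tc_obj Tc) ⊚ pmap K (pairing P (tc_str Tc) (idm (tc_obj Tc))).

Local Notation M := (Mo FA).
Local Notation Mmap := (Mmap FA).
Local Notation sharpM := (sharpM FA).
Local Notation Cc := (tc_obj Tc).
Local Notation c := (tc_str Tc).
Local Notation rho := (rho P ell).
Local Notation "f ⊗ g" := (prod_map P f g) (at level 35).
Local Notation π1 := (pi1 P _ _).
Local Notation π2 := (pi2 P _ _).

(* Both sides of the pairing are K-algebra morphisms from M C into
   <H b^# ⊚ ell, b ⊚ K π2> that agree on eta. *)
Lemma sharp_b_coalg :
  c ⊚ sharpM b = pmap H (sharpM b) ⊚ (π1 ⊚ (rho Cc ⊚ Mmap (pairing P c (idm Cc)))).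
Proof.
  have b_eqnE : c ⊚ b = pmap H (sharpM b) ⊚ (ell Cc ⊚ pmap K (pairing P c (idm Cc))).
    by rewrite b_eqn sharpE comp_assoc.
  pose beta := pairing P (pmap H (sharpM b) ⊚ ell Cc) (b ⊚ pmap K (pi2 P (H Cc) Cc)).
  suff pair_eq : pairing P (c ⊚ sharpM b) (sharpM b) =
      pmap H (sharpM b) ⊗ sharpM b ⊚ (rho Cc ⊚ Mmap (pairing P c (idm Cc))).
    by rewrite -(pairing_pi1 P (c ⊚ sharpM b) (sharpM b)) pair_eq; simpl_M.
  apply: (free_hom_eq FA beta).
  - by rewrite pairing_comp -!comp_assoc sharpM_phi comp_assoc b_eqnE /beta; simpl_M.
  - rewrite -!comp_assoc Mmap_phi (comp_assoc (rho Cc)) rho_phi /ell_alg /beta; simpl_M.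
    rewrite (fmap_comp K (pmap H (sharpM b) ⊗ sharpM b)) (ell_natE_comp _ _ ell_nat); simpl_M.
    by rewrite sharpM_muM sharpM_phi_comp; simpl_M.
  - rewrite pairing_comp -!comp_assoc sharpM_eta Mmap_eta (comp_assoc (rho Cc)) rho_eta.
    by simpl_M.
Qed.

Lemma terminal_hom_eq {Z} {z : Hom Z (H Z)} {h1 h2 : Hom Z Cc} :
  c ⊚ h1 = pmap H h1 ⊚ z -> c ⊚ h2 = pmap H h2 ⊚ z -> h1 = h2.
Proof. by move=> /tc_unfold_uniq -> /tc_unfold_uniq ->. Qed.

Context (S : BinCoproducts C) (cinv : Hom (H Cc) Cc).
Hypothesis cinv_l : cinv ⊚ c = idm Cc.
Hypothesis cinv_r : c ⊚ cinv = idm (H Cc).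

Local Notation muM := (muM FA).
Local Notation eta := (eta FA).
Local Notation inl := (inl_ S _ _).
Local Notation inr := (inr_ S _ _).
Local Notation MHM := (MHM_functor FA H).

Definition kprime : Hom (M (H (M Cc))) Cc := sharpM b ⊚ (Mmap cinv ⊚ Mmap (pmap H (sharpM b))).

Lemma MHM_map {X Y} (f : Hom X Y) : pmap MHM f = Mmap (pmap H (Mmap f)).
Proof. by rewrite -!MmapE. Qed.

Lemma kprime_MHM {X} (h : Hom X Cc) :
  kprime ⊚ pmap MHM h = sharpM b ⊚ Mmap (cinv ⊚ pmap H (sharpM b ⊚ Mmap h)).
Proof. by rewrite MHM_map /kprime; simpl_M; rewrite -(fmap_comp H). Qed.

Section Solution.
Context {X : C} (e : Hom X (coprO S (M (H (M X))) Cc)).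

Local Notation Y := (coprO S (H (M X)) Cc).

(* The equation e, read as a term over the unknowns Y. *)
Definition eqn_term : Hom X (M Y) := copair S (Mmap inl) (eta Y ⊚ inr) ⊚ e.

Definition eqn_step : Hom Y (H (M Y)) :=
  copair S (pmap H (muM Y ⊚ Mmap eqn_term)) (pmap H (eta Y ⊚ inr) ⊚ c).

Definition eqn_coalg : Hom (M Y) (H (M Y)) :=
  pmap H (muM Y) ⊚ (π1 ⊚ (rho (M Y) ⊚ Mmap (pairing P eqn_step (eta Y)))).

Definition eqn_sem : Hom (M Y) Cc := tc_unfold Tc eqn_coalg.

Lemma eqn_sem_coalg : c ⊚ eqn_sem = pmap H eqn_sem ⊚ eqn_coalg.
Proof. exact: tc_unfold_spec. Qed.

Lemma eqn_coalg_eta : eqn_coalg ⊚ eta Y = eqn_step.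
Proof. by rewrite /eqn_coalg; simpl_M; rewrite rho_eta_comp; simpl_M. Qed.

Lemma pairing_eqn_coalg : pairing P eqn_coalg (idm (M Y)) =
  pmap H (muM Y) ⊗ muM Y ⊚ (rho (M Y) ⊚ Mmap (pairing P eqn_step (eta Y))).
Proof.
  apply: pairing_ext.
  - by rewrite pairing_pi1 pi1_prod_map_comp.
  - by rewrite pairing_pi2 pi2_prod_map_comp (comp_assoc π2) pi2_rho Mmap_comp pairing_pi2
      muM_Mmap_eta.
Qed.

Lemma eqn_coalg_muM : eqn_coalg ⊚ muM Y =
  pmap H (muM Y) ⊚ (π1 ⊚ (rho (M Y) ⊚ Mmap (pairing P eqn_coalg (idm _)))).
Proof.
  rewrite pairing_eqn_coalg -Mmap_comp (comp_assoc (rho (M Y))) (rho_nat _ _ ell_nat).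
  rewrite /eqn_coalg -!comp_assoc muM_nat (comp_assoc (rho (M Y))) (rho_muM _ _ ell_nat).
  rewrite -!comp_assoc pi1_prod_map_comp (comp_assoc (pmap H (muM Y))) -fmap_comp muM_assoc.
  by simpl_M.
Qed.

Lemma eqn_sem_muM : eqn_sem ⊚ muM Y = sharpM b ⊚ Mmap eqn_sem.
Proof.
  apply: (terminal_hom_eq (z := π1 ⊚ (rho (M Y) ⊚ Mmap (pairing P eqn_coalg (idm _))))).
  - by rewrite comp_assoc eqn_sem_coalg -comp_assoc eqn_coalg_muM; simpl_M.
  - rewrite comp_assoc sharp_b_coalg -!comp_assoc Mmap_comp pairing_comp comp_idl eqn_sem_coalg.
    have -> : pairing P (pmap H eqn_sem ⊚ eqn_coalg) eqn_sem =
        pmap H eqn_sem ⊗ eqn_sem ⊚ pairing P eqn_coalg (idm _)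
      by rewrite prod_map_pairing comp_idr.
    rewrite -(Mmap_comp FA (pmap H eqn_sem ⊗ eqn_sem)) (comp_assoc (rho Cc))
      (rho_nat _ _ ell_nat).
    by simpl_M.
Qed.

Lemma eqn_sem_sharp : eqn_sem = sharpM b ⊚ Mmap (eqn_sem ⊚ eta Y).
Proof. by rewrite -Mmap_comp comp_assoc -eqn_sem_muM -comp_assoc muM_Mmap_eta comp_idr. Qed.

Lemma eqn_sem_inr : eqn_sem ⊚ (eta Y ⊚ inr) = idm Cc.
Proof.
  apply: (terminal_hom_eq (z := c)); last by rewrite fmap_id comp_idl comp_idr.
  by rewrite comp_assoc eqn_sem_coalg -comp_assoc (comp_assoc eqn_coalg) eqn_coalg_eta
    /eqn_step copair_inr; simpl_M.
Qed.

Lemma eqn_sem_inl :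
  c ⊚ (eqn_sem ⊚ (eta Y ⊚ inl)) = pmap H (sharpM b ⊚ Mmap (eqn_sem ⊚ eqn_term)).
Proof.
  rewrite comp_assoc eqn_sem_coalg -comp_assoc (comp_assoc eqn_coalg) eqn_coalg_eta
    /eqn_step copair_inl -fmap_comp comp_assoc eqn_sem_muM -comp_assoc Mmap_comp.
  by [].
Qed.

Lemma eqn_sem_solution : is_solution S (G := MHM) kprime e (eqn_sem ⊚ eqn_term).
Proof.
  rewrite /is_solution copair_sum_map kprime_MHM {1}/eqn_term comp_assoc; congr (_ ⊚ e).
  apply: copair_ext; rewrite ?copair_inl ?copair_inr -comp_assoc ?copair_inl ?copair_inr.
  - rewrite {1}eqn_sem_sharp -comp_assoc Mmap_comp; do 2 f_equal.
    rewrite -comp_assoc -(comp_idl (eqn_sem ⊚ (eta Y ⊚ inl))) -cinv_l -comp_assoc eqn_sem_inl.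
    by rewrite /eqn_term comp_assoc.
  - by rewrite eqn_sem_inr comp_idl.
Qed.

Section Uniqueness.
Context {h : Hom X Cc} (sol_h : is_solution S (G := MHM) kprime e h).

(* A solution h induces an interpretation of the unknowns Y, hence of terms over
   them, and this interpretation is a coalgebra morphism, so it is eqn_sem. *)
Definition unknowns_sem : Hom Y Cc := copair S (cinv ⊚ pmap H (sharpM b ⊚ Mmap h)) (idm Cc).
Definition terms_sem : Hom (M Y) Cc := sharpM b ⊚ Mmap unknowns_sem.

Lemma terms_sem_eta : terms_sem ⊚ eta Y = unknowns_sem.
Proof. by rewrite /terms_sem -comp_assoc Mmap_eta sharpM_eta_comp. Qed.

Lemma solution_terms_sem : h = terms_sem ⊚ eqn_term.
Proof.
  have lift_eq : terms_sem ⊚ copair S (Mmap inl) (eta Y ⊚ inr) =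
      copair S (kprime ⊚ pmap MHM h) (idm Cc).
  { rewrite kprime_MHM; apply: copair_ext; rewrite -!comp_assoc ?copair_inl ?copair_inr /terms_sem.
    - by rewrite Mmap_comp /unknowns_sem copair_inl.
    - by rewrite Mmap_eta_comp sharpM_eta_comp /unknowns_sem copair_inr. }
  by rewrite /eqn_term comp_assoc lift_eq {1}sol_h copair_sum_map comp_idl.
Qed.

Lemma terms_sem_coalg : c ⊚ terms_sem = pmap H terms_sem ⊚ eqn_coalg.
Proof.
  have step_eq : pairing P (c ⊚ unknowns_sem) unknowns_sem =
      pmap H terms_sem ⊗ terms_sem ⊚ pairing P eqn_step (eta Y).
  { rewrite prod_map_pairing terms_sem_eta; congr (pairing P _ _); apply: copair_ext.
    - rewrite /unknowns_sem /eqn_step -comp_assoc !copair_inl comp_assoc cinv_r comp_idl.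
      rewrite -comp_assoc copair_inl -fmap_comp; congr (pmap H _).
      rewrite {1}solution_terms_sem -Mmap_comp comp_assoc /terms_sem sharpM_Mmap_muM.
      by rewrite -!comp_assoc.
    - rewrite /unknowns_sem /eqn_step -comp_assoc !copair_inr comp_idr -!comp_assoc copair_inr.
      by rewrite fmap_comp_comp comp_assoc terms_sem_eta copair_inr fmap_id comp_idl. }
  rewrite {1}/terms_sem comp_assoc sharp_b_coalg -!comp_assoc Mmap_comp pairing_comp comp_idl.
  rewrite step_eq.
  rewrite -(Mmap_comp FA (pmap H terms_sem ⊗ terms_sem)) (comp_assoc (rho Cc))
    (rho_nat _ _ ell_nat).
  rewrite -!comp_assoc pi1_prod_map_comp fmap_comp_comp /eqn_coalg fmap_comp_comp.
  by rewrite /terms_sem sharpM_Mmap_muM -!comp_assoc.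
Qed.

Lemma solution_unique : h = eqn_sem ⊚ eqn_term.
Proof.
  by rewrite {1}solution_terms_sem (terminal_hom_eq terms_sem_coalg eqn_sem_coalg).
Qed.

End Uniqueness.

End Solution.

Lemma kprime_cia : is_cia S (G := MHM) kprime.
Proof.
  apply/is_ciaP => X e; exists (eqn_sem e ⊚ eqn_term e); split; first exact: eqn_sem_solution.
  by move=> h; apply: solution_unique.
Qed.

End Interpretation.

Theorem mainTheorem8
  (C : Category) (P : BinProducts C) (S : BinCoproducts C)
  (K H V : Functor C)
  (FA : FreeAlgebras K)
  (Tc : TerminalCoalgebra H)
  (cinv : Hom (H (tc_obj Tc)) (tc_obj Tc))
  (cinv_l : cinv ⊚ tc_str Tc = idm (tc_obj Tc))
  (cinv_r : tc_str Tc ⊚ cinv = idm (H (tc_obj Tc)))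
  (ell : forall X, Hom (K (prodO P (H X) X)) (H (Mo FA X)))
  (ell_nat : @is_GSOS_rule C P K H FA ell)
  (b : Hom (K (tc_obj Tc)) (tc_obj Tc))
  (b_interp : @is_ell_interpretation C P K H FA Tc ell b)
  (It : Iteratable S (sumF S (compF (MF FA) (compF H (MF FA))) V))
  (e : forall X, Hom (V X) (TG It X))
  (e_rps : @is_RPS C S _ V It e)
  (e_guarded : @is_guarded C S _ V It e) :
  let L := compF (MF FA) (compF H (MF FA)) in
  let k' : Hom (L (tc_obj Tc)) (tc_obj Tc) :=
      sharp FA b ⊚ pmap (MF FA) cinv ⊚ pmap (MF FA) (pmap H (sharp FA b)) in
  (exists s : Hom (V (tc_obj Tc)) (tc_obj Tc),
      @is_interpreted_solution C S L V It e _ k' s /\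
      (forall s', @is_interpreted_solution C S L V It e _ k' s' -> s' = s) /\
      @is_cia C S (sumF S L V) _ (copair S k' s)).
Proof.
  move=> L k'; case: b_interp => b_eqn _.
  have -> : k' = kprime Tc b cinv by rewrite /k' /kprime -!MmapE -!sharpE comp_assoc.
  have k_cia := kprime_cia P ell_nat Tc b b_eqn S cinv cinv_l cinv_r.
  exact: (guarded_scheme_solution S (MHM_functor FA H) V It k_cia e e_guarded).
Qed.
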